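(* Let $k\ge 0$ and $d\ge 1$ be integers. A vector $\mathfrak{c}=(c_1,\ldots,c_d)\in\mathbb{N}^d$ is the clique vector of a $k$-connected chordal graph if and only if the vector $\mathfrak{b}=(b_1,\ldots,b_d)$ defined by the polynomial identity \[ \sum_{i=1}^d b_i x^{i-1}=\sum_{i=1}^d c_i (x-1)^{i-1} \] has all components positive, $d\ge k$, and $b_1=b_2=\cdots=b_k=1$.
   Context: All graphs are finite and simple. The clique vector $\mathfrak{c}(G)$ of a graph $G$ is $(c_1,\ldots,c_d)$, where $c_i$ is the number of cliques (complete subgraphs) of $G$ with exactly $i$ vertices and $d$ is the largest cardinality of a clique in $G$ (the clique number). A graph is $k$-connected if it has at least $k$ vertices and removing any set of fewer than $k$ vertices yields a connected graph; by convention every graph is $0$-connected. A graph is chordal if every cycle of length at least $4$ has a chord. *)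

From HB Require Import structures.
From mathcomp Require Import all_boot all_order all_algebra.
Set Implicit Arguments. Unset Strict Implicit. Unset Printing Implicit Defensive.
Import Order.TTheory GRing.Theory Num.Theory.

Section Graphs.
Variable T : finType.
Variable e : rel T.

Definition simple_graph : Prop := symmetric e /\ irreflexive e.

Definition is_clique (S : {set T}) : bool :=
  [forall x in S, forall y in S, (x != y) ==> e x y].

Definition num_cliques (i : nat) : nat :=
  #|[set S : {set T} | is_clique S & #|S| == i]|.

Definition clique_number : nat := \max_(S : {set T} | is_clique S) #|S|.

Definition clique_vector : seq nat :=
  [seq num_cliques i | i <- iota 1 clique_number].

Definition induced_connected (A : {set T}) : Prop :=
  forall x y, x \in A -> y \in A ->
    connect [rel u v | [&& e u v, u \in A & v \in A]] x y.

Definition k_connected (k : nat) : Prop :=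
  k <= #|T| /\ forall S : {set T}, #|S| < k -> induced_connected (~: S).

(* chordal: every cycle (distinct vertices s_0,...,s_{m-1}, m >= 4, with
   consecutive vertices and s_{m-1}, s_0 adjacent) has a chord, i.e. an
   edge between two cycle vertices that are not consecutive on the cycle *)
Definition chordal : Prop :=
  forall (x : T) (s : seq T), let c := x :: s in
    uniq c -> 4 <= size c -> cycle e c ->
    exists i j, [/\ i < j, j < size c, j != i.+1,
                    ~~ ((i == 0) && (j == (size c).-1)) &
                    e (nth x c i) (nth x c j)].
End Graphs.

(* b-polynomial: sum_i b_i x^(i-1) = sum_i c_i (x-1)^(i-1); b_i = coefficient i-1 *)
Definition bpoly (c : seq nat) : {poly int} :=
  (\sum_(i < size c) ((nth 0 c i)%:Z)%:P * ('X - 1) ^+ i)%R.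

From HB Require Import structures.
From mathcomp Require Import all_boot all_order all_algebra.
From mathcomp Require Import zify.
Set Implicit Arguments. Unset Strict Implicit. Unset Printing Implicit Defensive.
Import Order.TTheory GRing.Theory Num.Theory.

(* Deleting a simplicial vertex whose neighbourhood has s vertices deletes,
   for every i, exactly C(s, i) cliques with i + 1 vertices; in the
   b-polynomial this subtracts x^s, and a clique on d vertices has
   b-polynomial 1 + x + ... + x^(d-1).  In a chordal graph every vertex set
   properly containing a clique K has a simplicial vertex outside K (Dirac),
   so eliminating vertices down to a maximum clique gives
     b = 1 + x + ... + x^(d-1) + x^(s_1) + ... + x^(s_m),
   and k-connectivity forces every s_j >= k, since otherwise the neighbourhood
   of the deleted vertex would separate it from the clique.  Conversely, any
   such sum is realised by a d-clique with one extra vertex joined to s_j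
   vertices of the clique for each j; this graph has a perfect elimination
   ordering, hence is chordal, and it is k-connected when all s_j >= k. *)

(** * The b-polynomial *)

Lemma coef_bpoly_comp c j : ((bpoly c \Po ('X + 1))`_j = (nth 0 c j)%:Z)%R.
Proof.
rewrite /bpoly rmorph_sum coef_sum.
under eq_bigr => i _ do rewrite rmorphM /= comp_polyC rmorphXn /= rmorphB /=
  comp_polyX rmorph1 addrK coefCM coefXn.
have [jc|cj] := ltnP j (size c); last first.
  rewrite nth_default // big1 // => i _; case: eqVneq => [ji|]; last by rewrite mulr0.
  by move: (ltn_ord i); rewrite -ji ltnNge cj.
rewrite (bigD1 (Ordinal jc)) //= eqxx mulr1 big1 ?addr0 // => i ij.
by case: eqVneq => [ji|]; [move: ij; rewrite -val_eqE /= ji eqxx | rewrite mulr0].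
Qed.

Lemma bpoly_nth_inj c1 c2 : bpoly c1 = bpoly c2 -> nth 0 c1 =1 nth 0 c2.
Proof. by move=> eq12 j; apply/eqP; rewrite -eqz_nat -!coef_bpoly_comp eq12. Qed.

Lemma size_bpoly c : size (bpoly c) <= size c.
Proof.
apply/leq_sizeP => j cj; rewrite coef_sum big1 // => i _.
rewrite coefCM [X in (_ * X)%R]nth_default ?mulr0 // -polyC1 size_exp_XsubC.
exact: leq_trans (ltn_ord i) cj.
Qed.

Definition excess_exponents (p : {poly int}) d : seq nat :=
  flatten [seq nseq (absz (p`_t)%R).-1 t | t <- index_iota 0 d].

Lemma mem_excess_exponents p d t :
  t \in excess_exponents p d = (t < d) && (1 < absz (p`_t)%R).
Proof.
apply/flatten_mapP/andP => [[t' t'd /nseqP[-> p1]]|[td pt]].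
  by move: t'd; rewrite mem_index_iota; lia.
by exists t; rewrite ?mem_index_iota //; apply/nseqP; split=> //; lia.
Qed.

Lemma sum_Xn_excess_exponents (p : {poly int}) d :
  size p <= d -> (forall i, i < d -> (0 < p`_i)%R) ->
  p = (\sum_(t < d) 'X^t + \sum_(s <- excess_exponents p d) 'X^s)%R.
Proof.
move=> /leq_sizeP p_hi p_pos.
rewrite big_flatten big_map big_mkord -big_split /=.
transitivity (\sum_(t < d) (p`_t) *: 'X^t)%R.
  rewrite -poly_def; apply/polyP => j; rewrite coef_poly.
  by case: ltnP => // /p_hi.
apply: eq_bigr => t _; rewrite big_nseq iter_addr_0 -mulrS prednK; last first.
  by rewrite absz_gt0 gt_eqF ?p_pos.
by rewrite -scaler_nat natz abszE ger0_norm ?ltW ?p_pos.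
Qed.

Lemma coef_sum_ordXn (R : nzRingType) n i :
  ((\sum_(t < n) 'X^t : {poly R})`_i = (i < n)%:R)%R.
Proof.
rewrite coef_sum; under eq_bigr => t _ do rewrite coefXn.
have [lt_in|le_ni] := ltnP i n.
  rewrite (bigD1 (Ordinal lt_in)) //= eqxx big1 ?addr0 // => t tne.
  by case: eqVneq => // it; move: tne; rewrite -val_eqE /= -it eqxx.
by rewrite big1 // => t _; case: eqVneq => // it; move: le_ni; rewrite it leqNgt ltn_ord.
Qed.

(** * Cliques, simplicial vertices and the b-polynomial of a graph *)

Section Graph.
Variables (T : finType) (e : rel T).
Hypotheses (e_sym : symmetric e) (e_irr : irreflexive e).

Lemma cliqueP (S : {set T}) :
  reflect (forall x y, x \in S -> y \in S -> x != y -> e x y) (is_clique e S).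
Proof.
apply: (iffP forall_inP) => [H x y xS yS | H x xS].
  by move/forall_inP/(_ y yS)/implyP: (H x xS).
by apply/forall_inP => y yS; apply/implyP; apply: H.
Qed.

Lemma sub_clique (S S' : {set T}) : S' \subset S -> is_clique e S -> is_clique e S'.
Proof. by move/subsetP=> sS /cliqueP cS; apply/cliqueP => x y /sS xS /sS; apply: cS. Qed.

Definition nbhd (A : {set T}) v := [set u in A | e v u].

Definition simplicial (A : {set T}) v := (v \in A) && is_clique e (nbhd A v).

Lemma nbhd_sub A v : nbhd A v \subset A.
Proof. by apply/subsetP => u; rewrite inE => /andP[]. Qed.

Lemma notin_nbhd A v : v \notin nbhd A v.
Proof. by rewrite inE e_irr andbF. Qed.

Definition cliques_in (A : {set T}) j :=
  [set S : {set T} | [&& S \subset A, is_clique e S & #|S| == j]].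

(* The b-polynomial of the subgraph induced on [A]; only clique sizes up to
   [#|T|] can occur, which bounds the sum. *)
Definition clique_bpoly (A : {set T}) : {poly int} :=
  (\sum_(i < #|T|.+1) (#|cliques_in A i.+1|%:Z)%:P * ('X - 1) ^+ i)%R.

Lemma card_cliques_in_simplicial A v i : simplicial A v ->
  #|cliques_in A i.+1| = #|cliques_in (A :\ v) i.+1| + 'C(#|nbhd A v|, i).
Proof.
case/andP=> vA /cliqueP cN.
have vN (S : {set T}) : S \subset nbhd A v -> v \notin S.
  by move=> /subsetP sS; apply: contraNN (notin_nbhd A v) => /sS.
rewrite -(cardsID [set S : {set T} | v \in S] (cliques_in A i.+1)) addnC.
congr (_ + _).
  apply: eq_card => S; rewrite !inE subsetD1.
  by case: (v \in S); rewrite /= ?andbF ?andbT.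
rewrite -cards_draws -(card_in_imset (f := fun S => v |: S)
   (D := [set S : {set T} | S \subset nbhd A v & #|S| == i])); last first.
  move=> S1 S2; rewrite !inE => /andP[/vN v1 _] /andP[/vN v2 _] E.
  by rewrite -(setU1K v1) -(setU1K v2) E.
apply: eq_card => S; rewrite !inE; apply/idP/imsetP.
- case/andP=> /and3P[SA /cliqueP cS /eqP cardS] vS; exists (S :\ v); last first.
    by rewrite setD1K.
  rewrite inE; apply/andP; split.
    apply/subsetP => u; rewrite !inE => /andP[uv uS].
    by rewrite (subsetP SA _ uS) cS // eq_sym.
  by move: cardS; rewrite (cardsD1 v S) vS add1n => -[->].
- case=> S'; rewrite inE => /andP[sub /eqP cS'] ->.
  have [vS' sA] := (vN _ sub, subset_trans sub (nbhd_sub A v)).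
  rewrite setU11 andbT cardsU1 cS' vS' eqxx andbT subUset sub1set vA sA /=.
  have nbv x : x \in S' -> e v x by move/(subsetP sub); rewrite inE => /andP[].
  apply/cliqueP => x y; rewrite !inE => /predU1P[->|xS] /predU1P[->|yS].
  + by rewrite eqxx.
  + by move=> _; apply: nbv.
  + by move=> _; rewrite e_sym nbv.
  + by apply: cN; apply: (subsetP sub).
Qed.

Lemma clique_bpoly_simplicial A v : simplicial A v ->
  clique_bpoly A = (clique_bpoly (A :\ v) + 'X^#|nbhd A v|)%R.
Proof.
move=> sv; set s := #|nbhd A v|.
have -> : ('X^s = \sum_(i < #|T|.+1) ('C(s, i)%:Z)%:P * ('X - 1) ^+ i :> {poly int})%R.
  rewrite -{1}(subrK 1 'X)%R exprD1n.
  rewrite (big_ord_widen #|T|.+1 (fun i => ('X - 1) ^+ i *+ 'C(s, i))%R) ?ltnS ?max_card //.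
  rewrite big_mkcond /=; apply: eq_bigr => i _; case: ifP => hi.
    by rewrite -natz polyC_natr mulr_natl.
  by rewrite bin_small ?mul0r // ltnNge -ltnS hi.
rewrite /clique_bpoly -big_split /=; apply: eq_bigr => i _.
by rewrite (card_cliques_in_simplicial i sv) PoszD polyCD mulrDl.
Qed.

Lemma clique_bpoly_clique K : is_clique e K ->
  clique_bpoly K = (\sum_(t < #|K|) 'X^t)%R.
Proof.
move cardK: #|K| => n; elim: n K cardK => [|n IH] K cardK cK.
  move/eqP: cardK; rewrite cards_eq0 => /eqP ->; rewrite big_ord0 /clique_bpoly.
  apply: big1 => i _; apply/eqP; rewrite mulf_eq0 polyC_eq0; apply/orP; left.
  rewrite eqz_nat cards_eq0; apply/eqP/setP => S; rewrite !inE subset0.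
  by apply/negP => /and3P[/eqP -> _]; rewrite cards0.
have [v vK] : {v | v \in K} by apply/sigW/set0Pn; rewrite -card_gt0 cardK.
have cardKv : #|K :\ v| = n by move: cardK; rewrite (cardsD1 v K) vK => -[].
have eN : nbhd K v = K :\ v.
  apply/setP => u; rewrite !inE; case: (eqVneq u v) => [->|uv].
    by rewrite e_irr andbF.
  by apply/andP/idP => [[]//|uK]; split=> //; apply: (cliqueP _ cK); rewrite // eq_sym.
have sv : simplicial K v by rewrite /simplicial vK eN (sub_clique (subD1set K v) cK).
rewrite (clique_bpoly_simplicial sv) IH ?(sub_clique (subD1set K v)) //.
by rewrite big_ord_recr /= eN cardKv.
Qed.

Lemma clique_bpoly_setT : clique_bpoly setT = bpoly (clique_vector e).
Proof.
set d := clique_number e.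
have dT : d <= #|T| by apply/bigmax_leqP => S _; apply: max_card.
have no_big_cliques i : d <= i -> #|cliques_in setT i.+1| = 0.
  move=> di; apply: eq_card0 => S; rewrite inE subsetT /=.
  apply/negP => /andP[cS /eqP cardS].
  have := leq_bigmax_cond (F := fun S => #|S|) (P := fun S => is_clique e S) _ cS.
  by rewrite cardS -/d ltnNge di.
rewrite /bpoly size_map size_iota /clique_bpoly.
rewrite (big_ord_widen #|T|.+1 (fun i => ((nth 0 (clique_vector e) i)%:Z)%:P * ('X - 1) ^+ i)%R
  (leq_trans dT (leqnSn _))).
rewrite [in RHS]big_mkcond /=; apply: eq_bigr => i _; case: ifP => hi.
  rewrite /clique_vector (nth_map 0) ?size_iota // nth_iota // add1n.
  by congr (((_)%:Z)%:P * _)%R; apply: eq_card => S; rewrite !inE subsetT.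
by rewrite no_big_cliques ?mul0r // leqNgt hi.
Qed.

Lemma max_clique_exists : exists K, [/\ is_clique e K,
  forall S, is_clique e S -> #|S| <= #|K| & #|K| = clique_number e].
Proof.
have [|K cK K_max] := @arg_maxnP _ set0 (is_clique e) (fun S => #|S|).
  by apply/cliqueP => x y; rewrite inE.
exists K; split=> //; apply/eqP; rewrite eqn_leq; apply/andP; split.
  exact: (leq_bigmax_cond (F := fun S => #|S|) (P := is_clique e) _ cK).
by apply/bigmax_leqP => S /K_max.
Qed.

Lemma clique_vector_last_gt0 : 0 < clique_number e ->
  0 < nth 0 (clique_vector e) (clique_number e).-1.
Proof.
move=> w_gt0; have [K [cK _ cardK]] := max_clique_exists.
rewrite /clique_vector (nth_map 0) ?size_iota ?prednK // nth_iota ?prednK // add1n prednK //.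
by rewrite /num_cliques card_gt0; apply/set0Pn; exists K; rewrite inE cK cardK eqxx.
Qed.

Lemma clique_vector_eq_bpoly c : bpoly (clique_vector e) = bpoly c ->
  size c <= clique_number e -> clique_vector e = c.
Proof.
move=> eq_b c_le; have eq_nth := bpoly_nth_inj eq_b.
have w_le : clique_number e <= size c.
  rewrite leqNgt; apply/negP => c_lt.
  have := clique_vector_last_gt0 (leq_ltn_trans (leq0n _) c_lt).
  by rewrite eq_nth nth_default // -ltnS prednK // (leq_ltn_trans (leq0n _) c_lt).
have sz : size (clique_vector e) = size c.
  by rewrite size_map size_iota; apply/eqP; rewrite eqn_leq w_le c_le.
by apply: (eq_from_nth (x0 := 0)) => // i _; apply: eq_nth.
Qed.

(** * Chordal graphs *)

(* A vertex of maximal rank on a cycle has two cycle neighbours of smaller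
   rank; they are adjacent, and on a cycle of length at least four they are
   not consecutive. *)
Lemma chordal_of_peo (r : T -> nat) : injective r ->
    (forall u v w, e u w -> e v w -> r u < r w -> r v < r w -> u != v -> e u v) ->
  chordal e.
Proof.
move=> r_inj peo x s c U s4 CY.
have CYn := pathP x CY.
have next t : t < size s -> e (nth x c t) (nth x c t.+1).
  move=> ts; have := CYn t; rewrite size_rcons ltnS => /(_ (ltnW ts)).
  by rewrite -rcons_cons !nth_rcons /= ltnS (ltnW ts) ts.
have back : e (nth x c (size s)) (nth x c 0).
  have := CYn (size s); rewrite size_rcons ltnSn => /(_ isT).
  by rewrite -rcons_cons !nth_rcons /= ltnSn ltnn eqxx.
have [m m_lt m_max] : exists2 m, m < size c &
    forall t, t < size c -> r (nth x c t) <= r (nth x c m).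
  have [m _ m_max] := @arg_maxnP _ (@ord0 (size s)) xpredT (fun i => r (nth x c i)) isT.
  by exists m => // t tc; apply: (m_max (Ordinal tc)).
have chord i j : i < j -> j < size c -> j != i.+1 -> ~~ ((i == 0) && (j == size s)) ->
    i != m -> j != m -> e (nth x c i) (nth x c m) -> e (nth x c j) (nth x c m) ->
  exists i j, [/\ i < j, j < size c, j != i.+1, ~~ ((i == 0) && (j == (size c).-1)) &
                  e (nth x c i) (nth x c j)].
  move=> ij jc jn nl im jm eim ejm; exists i, j; split=> //.
  have lt_m t : t < size c -> t != m -> r (nth x c t) < r (nth x c m).
    move=> tc tm; rewrite ltn_neqAle m_max // andbT.
    by apply: contra tm => /eqP/r_inj/eqP; rewrite nth_uniq // => /eqP->.
  apply: peo eim ejm (lt_m i _ im) (lt_m j jc jm) _; first exact: ltn_trans ij jc.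
  by rewrite nth_uniq ?(ltn_trans ij jc) // neq_ltn ij.
have sc : size c = (size s).+1 := erefl.
have s3 : 3 <= size s := s4.
case: (posnP m) => [m0|m_gt0].
  apply: (chord 1 (size s)); rewrite ?m0 //; try lia.
  by rewrite e_sym next //; lia.
have [m_s|m_lt_s] : m = size s \/ m < size s by lia.
  apply: (chord 0 m.-1); rewrite ?m_s //; try lia.
    by rewrite e_sym.
  by rewrite -m_s -{2}(prednK m_gt0) next //; lia.
apply: (chord m.-1 m.+1); try lia.
- by rewrite -{2}(prednK m_gt0) next //; lia.
- by rewrite e_sym next.
Qed.

Definition chordless (x : T) (r : seq T) :=
  forall i j, i < j -> j < size r -> ~~ e (nth x (x :: r) i) (nth x r j).

Lemma last_take (x : T) r i : i <= size r -> last x (take i r) = nth x (x :: r) i.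
Proof.
elim: r x i => [|a r IH] x [|i] //= lt_ir.
by rewrite IH // (set_nth_default x).
Qed.

Lemma path_all_targets (R : rel T) (Q : pred T) x r :
  (forall u v, R u v -> Q v) -> path R x r -> all Q r.
Proof. by move=> RQ; elim: r x => //= u r IH x /andP[/RQ -> /IH]. Qed.

Lemma path_shortcut (R : rel T) x r i j : i < j -> j < size r -> path R x r ->
    R (nth x (x :: r) i) (nth x r j) ->
  [/\ path R x (take i r ++ drop j r), last x (take i r ++ drop j r) = last x r
    & size (take i r ++ drop j r) < size r].
Proof.
move=> ij jr pr Rij; have ir : i <= size r by lia.
have dj : drop j r = nth x r j :: drop j.+1 r by rewrite (drop_nth x).
have pi : path R x (take i r).
  by move: pr; rewrite -{1}(cat_take_drop i r) cat_path => /andP[].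
have pj : path R (nth x r j) (drop j.+1 r).
  by move: pr; rewrite -{1}(cat_take_drop j.+1 r) cat_path last_take // => /andP[].
split.
- by rewrite cat_path last_take // dj /= Rij pj pi.
- by rewrite last_cat last_take // dj /= -[in RHS](cat_take_drop j.+1 r) last_cat last_take.
- by rewrite size_cat size_takel // size_drop; lia.
Qed.

Lemma exists_chordless_path (Q : pred T) x r :
  let R := [rel u v | e u v && Q v] in path R x r ->
  exists r', [/\ path R x r', last x r' = last x r & chordless x r'].
Proof.
move=> R; have [n] := ubnP (size r); elim: n r => // n IH r /ltnSE hr pr.
have Qr : all Q r by apply: path_all_targets pr => u v /andP[].
have [chord | no_chord] := boolP [exists i : 'I_(size r), exists j : 'I_(size r),
                                   (i < j) && e (nth x (x :: r) i) (nth x r j)].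
  case/existsP: chord => i /existsP[j /andP[ij eij]].
  have Rij : R (nth x (x :: r) i) (nth x r j).
    by rewrite /= eij (allP Qr) ?mem_nth.
  have [pr' <- lt_r'r] := path_shortcut ij (ltn_ord j) pr Rij.
  by apply: IH pr'; apply: leq_trans hr.
exists r; split=> // i j ij jr; apply: contraNN no_chord => eij.
have ir : i < size r by lia.
by apply/existsP; exists (Ordinal ir); apply/existsP; exists (Ordinal jr); rewrite /= ij.
Qed.

Lemma chordless_uniq x r : path e x r -> x != last x r -> chordless x r -> uniq (x :: r).
Proof.
move=> /(pathP x) pr xl ch; apply: contraT => /(uniqPn x) [i [j [ij js eij]]].
case: j ij js eij => [//|j] ij /= js eij.
have [jr|rj] := ltnP j.+1 (size r).
  by move: (ch i j.+1 ij jr); rewrite eij (pr j.+1 jr).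
have sr : size r = j.+1 by lia.
case: i ij eij => [_ x_eq|i ij /= eij].
  by move: xl; rewrite (last_nth x) sr /= -x_eq eqxx.
by move: (ch i j ij js); rewrite -eij (pr i) //; lia.
Qed.

Definition induced (B : {set T}) : rel T := [rel u v | [&& e u v, u \in B & v \in B]].

Lemma induced_sym B : symmetric (induced B).
Proof. by move=> u w; rewrite /induced /= e_sym andbC [in RHS]andbC (andbC (w \in _)). Qed.

Section Chordal.
Hypothesis e_chordal : chordal e.

(* A chordless path closed up through a vertex [b] that sees only its two
   ends is an induced cycle of length at least four. *)
Lemma chordal_no_chordless_cycle b x r :
    uniq (b :: x :: r) -> 1 < size r -> path e x r -> chordless x r ->
    e b x -> e b (last x r) -> (forall j, j < (size r).-1 -> ~~ e b (nth x r j)) ->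
  False.
Proof.
move=> U r2 pr chr bx bl b_int.
have CY : cycle e (b :: x :: r) by rewrite /= rcons_path pr bx e_sym bl.
have [i [j [ij jc jn nlast]]] := @e_chordal b (x :: r) U (r2 : 4 <= size (b :: x :: r)) CY.
case: i ij jn nlast => [|i] ij jn nlast; case: j ij jc jn nlast => [|[|j]] //= ij jc jn nlast;
  set n := size r in r2 jc nlast *.
  by rewrite (set_nth_default x) //; apply/negP/b_int; move/eqP: nlast; lia.
have [ij' jr] : i < j /\ j < n by move/eqP: jn; lia.
rewrite (set_nth_default x) ?(set_nth_default x b) //=; last exact: ltnW (ltn_trans ij' jr).
by apply/negP/chr.
Qed.

(* A shortest path from [x] to [y] through [C], closed up through [b], would
   be an induced cycle of length at least four. *)
Lemma chordal_no_path_through (C : {set T}) b x y r :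
    x != y -> ~~ e x y -> e b x -> e b y -> b \notin C ->
    (forall c, c \in C -> ~~ e b c) ->
    path [rel u v | e u v && ((v \in C) || (v == y))] x r -> last x r != y.
Proof.
move=> xy nxy bx bY bC nbC /exists_chordless_path[r' [pr' <- chr']].
apply/negP => /eqP l'y.
have pe : path e x r' by apply: sub_path pr' => u v /andP[].
have Ur : uniq (x :: r') by apply: chordless_uniq pe _ chr'; rewrite l'y.
have Qr : all [pred v | (v \in C) || (v == y)] r'.
  by apply: path_all_targets pr' => u v /andP[].
have r2 : 1 < size r'.
  case: r' pr' l'y {pe Ur Qr chr'} => [|z [|w s]] //=.
    by move=> _ xe; rewrite xe eqxx in xy.
  by move=> /andP[/andP[exz _] _] ze; rewrite -ze exz in nxy.
have bnr : b \notin x :: r'.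
  rewrite in_cons negb_or; apply/andP; split.
    by apply: contraTneq bx => ->; rewrite e_irr.
  apply/negP => /(allP Qr) /orP[bC'|/eqP by_]; first by rewrite bC' in bC.
  by rewrite by_ e_irr in bY.
apply: (chordal_no_chordless_cycle _ r2 pe chr' bx); first by rewrite cons_uniq bnr.
  by rewrite l'y.
move=> j jr; have jr' := leq_trans jr (leq_pred _).
have /orP[/nbC //|/eqP nth_y] := allP Qr _ (mem_nth x jr').
have : index (nth x r' j) (x :: r') = index (last x r') (x :: r').
  by rewrite nth_y l'y.
rewrite (last_nth x) -[nth x r' j]/(nth x (x :: r') j.+1).
by rewrite !index_uniq //= => sr; rewrite -sr ltnn in jr.
Qed.

Section SeparatingClique.
Variables (A : {set T}) (a b : T).

(* [C] is the component of [a] in [A] minus the closed neighbourhood of [b];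
   the vertices [S] of [A] outside [C] adjacent to [C] separate [C] from [b],
   and chordality makes this separator a clique. *)
Local Notation B := (A :\: (b |: nbhd A b)).
Local Notation C := [set z in B | connect (induced B) a z].
Local Notation S := [set s in A :\: C | [exists c in C, e s c]].

Lemma mem_far u : (u \in B) = [&& u \in A, u != b & ~~ e b u].
Proof. by rewrite !inE; case: (u \in A); case: (u == b); case: (e b u). Qed.

Lemma mem_component_a : a \in A -> a != b -> ~~ e a b -> a \in C.
Proof. by move=> aA ab nab; rewrite inE connect0 mem_far aA ab e_sym nab. Qed.

Lemma component_far u : u \in C -> [&& u \in A, u != b & ~~ e b u].
Proof. by rewrite inE mem_far => /andP[]. Qed.

Lemma component_closed u w : u \in C -> e u w -> w \in B -> w \in C.
Proof.
rewrite [u \in _]inE => /andP[uB au] uw wB; rewrite inE wB /=.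
by apply: connect_trans au (connect1 _); rewrite /induced /= uw uB wB.
Qed.

Lemma attachment_nbhd s : s \in S -> (s \in A) && e b s.
Proof.
rewrite inE in_setD => /andP[/andP[sC sA] /existsP[c /andP[cC sc]]]; rewrite sA.
have /and3P[_ cb nbc] := component_far cC.
have [//|nbs] := boolP (e b s); case/negP: sC.
apply: (component_closed cC); first by rewrite e_sym.
rewrite mem_far sA nbs andbT; apply: contraNneq nbc => sb.
by rewrite -sb.
Qed.

Lemma attachments_clique : is_clique e S.
Proof.
apply/cliqueP => x y xS yS xy; apply: contraT => nxy.
have [/andP[_ bx] /andP[_ bY]] := (attachment_nbhd xS, attachment_nbhd yS).
move: xS yS => /setIdP[_ /exists_inP[cx cxC xcx]] /setIdP[_ /exists_inP[cy cyC ycy]].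
have : connect (induced B) cx cy.
  apply: connect_trans (_ : connect _ cx a) _.
    by rewrite (sym_connect_sym (induced_sym _)); move: cxC; rewrite inE => /andP[].
  by move: cyC; rewrite inE => /andP[].
case/connectP => p pp lp.
have pC u q : u \in C -> path (induced B) u q ->
    path [rel u v | e u v && ((v \in C) || (v == y))] u q.
  elim: q u => //= w q IHq u uC /andP[/and3P[uw _ wB] pq].
  have wC := component_closed uC uw wB.
  by rewrite /= uw wC IHq.
have bC : b \notin C by apply/negP => /component_far; rewrite eqxx andbF.
have nbC c : c \in C -> ~~ e b c by case/component_far/and3P.
have pth : path [rel u v | e u v && ((v \in C) || (v == y))] x (cx :: rcons p y).
  by rewrite /= rcons_path -lp pC //= xcx cxC e_sym ycy eqxx orbT.
have := chordal_no_path_through xy nxy bx bY bC nbC pth.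
by rewrite /= last_rcons eqxx.
Qed.

Lemma nbhd_component v : v \in C -> nbhd (C :|: S) v = nbhd A v.
Proof.
move=> vC; apply/setP => u; apply/setIdP/setIdP => -[uin evu]; split=> //.
  by case/setUP: uin => [/component_far/and3P[]|/attachment_nbhd/andP[]].
apply/setUP; case uC: (u \in C); [by left | right].
apply/setIdP; split; first by rewrite in_setD uC uin.
by apply/exists_inP; exists v; rewrite // e_sym.
Qed.

Lemma card_component_attachments : b \in A -> #|C :|: S| < #|A|.
Proof.
move=> bA.
have sub : C :|: S \subset A :\ b.
  apply/subsetP => u /setUP[/component_far/and3P[uA ub _]|/attachment_nbhd/andP[uA ebu]].
    by rewrite !inE ub uA.
  by rewrite !inE uA andbT; apply: contraTneq ebu => ->; rewrite e_irr.
by rewrite (cardsD1 b A) bA add1n ltnS subset_leq_card.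
Qed.

End SeparatingClique.

Lemma two_nonadjacent_simplicial (A : {set T}) :
    (forall a b, a \in A -> b \in A -> a != b -> ~~ e a b ->
       exists v, [/\ simplicial A v, v != b & ~~ e v b]) ->
    ~~ is_clique e A ->
  exists v1 v2, [/\ simplicial A v1, simplicial A v2, v1 != v2 & ~~ e v1 v2].
Proof.
move=> avoid /forall_inPn[a aA /forall_inPn[b bA]]; rewrite negb_imply => /andP[ab nab].
have [v1 [s1 v1b nv1b]] := avoid a b aA bA ab nab.
have [v2 [s2 v21 nv21]] : exists v, [/\ simplicial A v, v != v1 & ~~ e v v1].
  have v1A : v1 \in A by case/andP: s1.
  by apply: (avoid b); rewrite // 1?eq_sym 1?e_sym.
by exists v2, v1.
Qed.

(* Dirac's lemma, in the strong form that drives the induction: the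
   simplicial vertex can be chosen outside the closed neighbourhood of [b]. *)
Lemma chordal_simplicial_nonadjacent (A : {set T}) a b :
    a \in A -> b \in A -> a != b -> ~~ e a b ->
  exists v, [/\ simplicial A v, v != b & ~~ e v b].
Proof.
have [n] := ubnP #|A|; elim: n A a b => // n IH A a b /ltnSE hA aA bA ab nab.
set B := A :\: (b |: nbhd A b).
set C := [set z in B | connect (induced B) a z].
set S := [set s in A :\: C | [exists c in C, e s c]].
have hA' : #|C :|: S| < n := leq_trans (card_component_attachments a bA) hA.
have from_C v : v \in C -> simplicial (C :|: S) v ->
    exists v, [/\ simplicial A v, v != b & ~~ e v b].
  move=> vC /andP[_ cv]; have /and3P[vA vb nbv] := component_far vC.
  by exists v; rewrite /simplicial -(nbhd_component vC) vA cv vb e_sym.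
have aC : a \in C := mem_component_a aA ab nab.
have [cA'|ncA'] := boolP (is_clique e (C :|: S)).
  apply: (from_C a aC); rewrite /simplicial inE aC.
  exact: sub_clique (nbhd_sub _ _) cA'.
have [v1 [v2 [s1 s2 v12 nv12]]] :=
  two_nonadjacent_simplicial (fun x y => IH _ x y hA') ncA'.
have [v1C|v1C] := boolP (v1 \in C); first exact: from_C v1C s1.
have [v2C|v2C] := boolP (v2 \in C); first exact: from_C v2C s2.
have inS v : v \in C :|: S -> v \notin C -> v \in S by case/setUP => // ->.
have v1S : v1 \in S by apply: inS v1C; case/andP: s1.
have v2S : v2 \in S by apply: inS v2C; case/andP: s2.
by rewrite (cliqueP _ (attachments_clique A a b) v1 v2 v1S v2S v12) in nv12.
Qed.

Lemma chordal_simplicial_outside_clique (A K : {set T}) :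
    K \subset A -> is_clique e K -> ~~ (A \subset K) ->
  exists2 v, v \in A :\: K & simplicial A v.
Proof.
move=> KA cK /subsetPn[z zA zK].
have [cA|ncA] := boolP (is_clique e A).
  exists z; first by rewrite inE zK zA.
  by rewrite /simplicial zA; apply: sub_clique (nbhd_sub _ _) cA.
have [v1 [v2 [s1 s2 v12 nv12]]] :=
  two_nonadjacent_simplicial (@chordal_simplicial_nonadjacent A) ncA.
have [v1K|v1K] := boolP (v1 \in K); last by exists v1; rewrite // inE v1K; case/andP: s1.
have [v2K|v2K] := boolP (v2 \in K); last by exists v2; rewrite // inE v2K; case/andP: s2.
by rewrite (cliqueP _ cK v1 v2 v1K v2K v12) in nv12.
Qed.

Definition k_connected_on (A : {set T}) k :=
  k <= #|A| /\ forall S : {set T}, #|S| < k -> induced_connected e (A :\: S).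

Lemma k_connected_onT k : k_connected e k <-> k_connected_on setT k.
Proof.
rewrite /k_connected /k_connected_on cardsT.
by split=> -[kT cS]; split=> // S /cS; rewrite setTD.
Qed.

Lemma induced_connected_del_simplicial (D : {set T}) v :
  is_clique e (nbhd D v) -> induced_connected e D -> induced_connected e (D :\ v).
Proof.
move=> /cliqueP cN cD x y /setD1P[xv xD] /setD1P[yv yD].
case/connectP: (cD x y xD yD) => p0 /shortenP[p pth up _] yl.
rewrite {y yD}yl in yv *.
elim: p x xv xD pth up yv => [|u p IH] x xv xD /=; first by rewrite connect0.
case/andP=> /and3P[xu _ uD] pth /andP[xup up] lv.
have [uv|uv] := eqVneq u v; last first.
  apply: connect_trans (connect1 _) (IH u uv uD pth up lv).
  by rewrite /= xu !inE xv uv xD uD.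
subst u.
case: p IH pth up lv xup => [|w p] IH /=; first by rewrite eqxx.
case/andP=> /and3P[vw _ wD] pth /andP[_ up] lv xvwp.
have xwp : x \notin w :: p by apply: contra xvwp => xwp; rewrite in_cons xwp orbT.
have xw : e x w.
  apply: cN; last by apply: contraNneq xwp => ->; rewrite inE eqxx.
    by rewrite inE xD e_sym.
  by rewrite inE wD.
by apply: IH => //=; rewrite ?xw ?xD ?wD ?xwp.
Qed.

Lemma k_connected_on_del_simplicial A v k : k_connected_on A k -> simplicial A v ->
  k <= #|nbhd A v| -> k_connected_on (A :\ v) k.
Proof.
move=> [kA cA] /andP[vA cN] kN; split.
  apply: leq_trans kN (subset_leq_card _); apply/subsetP => u.
  rewrite !inE => /andP[uA evu]; rewrite uA andbT.
  by apply: contraTneq evu => ->; rewrite e_irr.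
move=> S /cA cS; rewrite setDDl setUC -setDDl.
apply: induced_connected_del_simplicial cS; apply: sub_clique cN.
by apply/subsetP => u; rewrite !inE => /andP[/andP[_ ->] ->].
Qed.

Section MaximumClique.
Variable K : {set T}.
Hypotheses (cK : is_clique e K) (K_max : forall S, is_clique e S -> #|S| <= #|K|).

(* Otherwise the neighbourhood of [v] would separate [v] from a vertex of
   [K] it misses, and [K] cannot lie inside it by maximality. *)
Lemma simplicial_outside_max_clique_deg (A : {set T}) v k :
    K \subset A -> k_connected_on A k -> v \in A :\: K -> simplicial A v ->
  k <= #|nbhd A v|.
Proof.
move=> KA [_ cA] /setDP[vA vK] /andP[_ cN]; rewrite leqNgt; apply/negP => /cA cAN.
have [w wK wN] : exists2 w, w \in K & w \notin nbhd A v.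
  apply/exists_inP; rewrite -negb_forall_in; apply/negP => /forall_inP KN.
  have cvK : is_clique e (v |: K).
    apply/cliqueP => x y /setU1P[->|xK] /setU1P[->|yK]; rewrite ?eqxx //.
    - by move=> _; have := KN y yK; rewrite inE => /andP[].
    - by move=> _; have := KN x xK; rewrite inE e_sym => /andP[].
    - exact: (cliqueP _ cK).
  by have := K_max cvK; rewrite cardsU1 vK ltnn.
have wA := subsetP KA w wK.
have vAN : v \in A :\: nbhd A v by rewrite in_setD notin_nbhd vA.
have wAN : w \in A :\: nbhd A v by rewrite in_setD wN wA.
case/connectP: (cAN v w vAN wAN) => -[|u p] /=.
  by move=> _ wv; rewrite -wv wK in vK.
case/andP=> /and3P[evu _ uAN] _ _.
by move: uAN; rewrite inE [u \in nbhd _ _]inE evu andbT andNb.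
Qed.

Lemma clique_bpoly_elimination (A : {set T}) k : K \subset A -> k_connected_on A k ->
  exists2 l : seq nat, all (leq k) l &
    clique_bpoly A = (clique_bpoly K + \sum_(s <- l) 'X^s)%R.
Proof.
have [n] := ubnP #|A|; elim: n A => // n IH A /ltnSE hA KA kA.
have [AK|AK] := boolP (A \subset K).
  exists [::]; rewrite // big_nil addr0; congr (clique_bpoly _).
  by apply/eqP; rewrite eqEsubset AK.
have [v vAK sv] := chordal_simplicial_outside_clique KA cK AK.
have /setDP[vA vK] := vAK.
have kN := simplicial_outside_max_clique_deg KA kA vAK sv.
have KAv : K \subset A :\ v by rewrite subsetD1 KA vK.
have hAv : #|A :\ v| < n by move: hA; rewrite (cardsD1 v A) vA.
have [l al eP] := IH _ hAv KAv (k_connected_on_del_simplicial kA sv kN).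
exists (#|nbhd A v| :: l); first by rewrite /= kN.
by rewrite (clique_bpoly_simplicial sv) eP big_cons addrAC addrA.
Qed.

Lemma k_connected_on_max_clique (A : {set T}) k :
  K \subset A -> k_connected_on A k -> k <= #|K|.
Proof.
move=> KA kA; have [AK|AK] := boolP (A \subset K).
  by apply: leq_trans kA.1 (subset_leq_card AK).
have [v vAK sv] := chordal_simplicial_outside_clique KA cK AK.
have /setDP[vA _] := vAK.
apply: leq_trans (simplicial_outside_max_clique_deg KA kA vAK sv) _.
have cvN : is_clique e (v |: nbhd A v).
  case/andP: sv => _ /cliqueP cN; apply/cliqueP => x y.
  move=> /setU1P[->|xN] /setU1P[->|yN]; rewrite ?eqxx //.
  - by move=> _; move: yN; rewrite inE => /andP[].
  - by move=> _; move: xN; rewrite inE e_sym => /andP[].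
  - exact: cN.
by have := K_max cvN; rewrite cardsU1 notin_nbhd add1n; apply: ltnW.
Qed.

End MaximumClique.

Lemma chordal_k_connected_bpoly k : k_connected e k ->
  [/\ forall i, i < clique_number e -> (0 < (bpoly (clique_vector e))`_i)%R,
      k <= clique_number e &
      forall i, i < k -> ((bpoly (clique_vector e))`_i = 1)%R].
Proof.
move=> /k_connected_onT kT; set b := bpoly _; have [K [cK K_max <-]] := max_clique_exists.
have [l al eP] := clique_bpoly_elimination cK K_max (subsetT K) kT.
have coef_b i : (b`_i = (i < #|K|)%:R + \sum_(s <- l) ('X^s : {poly int})`_i)%R.
  by rewrite /b -clique_bpoly_setT eP clique_bpoly_clique // coefD coef_sum_ordXn coef_sum.
have tail_ge0 i : (0 <= \sum_(s <- l) ('X^s : {poly int})`_i)%R.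
  by apply: sumr_ge0 => s _; rewrite coefXn ler0n.
have kK := k_connected_on_max_clique cK K_max (subsetT K) kT.
split=> // [i iK|i ik]; first by rewrite coef_b iK ltr_wpDr.
rewrite coef_b (leq_trans ik kK) big_seq big1 ?addr0 // => s /(allP al) ks.
by rewrite coefXn; case: eqVneq => // is_; move: ik; rewrite is_ ltnNge ks.
Qed.

End Chordal.

End Graph.

(** * Realizing a b-vector *)

Section Stacking.
Variables (d : nat) (L : seq nat).
Hypothesis L_lt : all (fun t => t < d) L.
Local Notation n := (d + size L).

(* Vertex [m] is adjacent exactly to the earlier vertices [0, back_deg m):
   the first [d] vertices form a clique, and vertex [d + j] is a simplicial
   vertex attached to the first [L_j] of them. *)
Definition back_deg m := if m < d then m else nth 0 L (m - d).

Definition stacked : rel 'I_n := fun u v => (u < back_deg v) || (v < back_deg u).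

Lemma back_deg_le_d m : back_deg m <= d.
Proof.
rewrite /back_deg; case: ltnP => [/ltnW //|dm].
have [mL|Lm] := ltnP (m - d) (size L); last by rewrite nth_default.
exact: ltnW (allP L_lt _ (mem_nth 0 mL)).
Qed.

Lemma back_deg_le m : back_deg m <= m.
Proof.
rewrite /back_deg; case: ltnP => // dm.
have [mL|Lm] := ltnP (m - d) (size L); last by rewrite nth_default.
exact: leq_trans (ltnW (allP L_lt _ (mem_nth 0 mL))) dm.
Qed.

Lemma stacked_sym : symmetric stacked.
Proof. by move=> u v; rewrite /stacked orbC. Qed.

Lemma stacked_irr : irreflexive stacked.
Proof. by move=> u; rewrite /stacked orbb ltnNge back_deg_le. Qed.

Lemma stacked_lt u v : stacked u v -> u < v -> u < back_deg v.
Proof.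
case/orP=> // vu uv; move: (leq_trans vu (back_deg_le u)).
by rewrite ltnNge ltnW.
Qed.

Lemma stacked_chordal : chordal stacked.
Proof.
apply: (chordal_of_peo stacked_sym (r := val)) => [|u v w uw vw ltuw ltvw uv].
  exact: val_inj.
have [ud vd] : u < d /\ v < d.
  by split; apply: leq_trans (back_deg_le_d w); apply: stacked_lt.
by rewrite /stacked /back_deg ud vd -neq_ltn val_eqE.
Qed.

Definition prefix m : {set 'I_n} := [set u : 'I_n | u < m].

Lemma card_prefix m : m <= n -> #|prefix m| = m.
Proof.
move=> mn; have inj : injective (widen_ord mn) by move=> i j [] /val_inj.
have -> : prefix m = widen_ord mn @: 'I_m.
  apply/setP => u; rewrite inE; apply/idP/imsetP => [um|[i _ ->]]; last exact: (ltn_ord i).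
  by exists (Ordinal um) => //; apply: val_inj.
by rewrite card_imset ?card_ord.
Qed.

Lemma prefix_clique m : m <= d -> is_clique stacked (prefix m).
Proof.
move=> md; apply/cliqueP => u v; rewrite !inE => um vm uv.
by rewrite /stacked /back_deg !(leq_trans _ md) // -neq_ltn val_eqE.
Qed.

Lemma exists_outside_prefix m (S : {set 'I_n}) : #|S| < m -> m <= n ->
  exists2 z : 'I_n, z < m & z \notin S.
Proof.
move=> Sm mn; have : ~~ (prefix m \subset S).
  by apply: contraTN Sm => /subset_leq_card; rewrite card_prefix // -leqNgt.
by case/subsetPn => z; rewrite inE => zm zS; exists z.
Qed.

Lemma stacked_k_connected k : all (leq k) L -> k <= d -> k_connected stacked k.
Proof.
move=> kL kd; split; first by rewrite card_ord (leq_trans kd (leq_addr _ _)).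
move=> S Sk x y; rewrite !inE => xS yS.
have near_core w : w \notin S -> exists2 z : 'I_n, [/\ z < d & z \notin S] &
    connect (induced stacked (~: S)) w z.
  move=> wS; have [wd|dw] := ltnP w d; first by exists w.
  have kw : k <= back_deg w.
    rewrite /back_deg ltnNge dw /=; apply: (allP kL); apply: mem_nth.
    by rewrite -(ltn_add2l d) subnKC // ltn_ord.
  have wn : back_deg w <= n := leq_trans (back_deg_le_d w) (leq_addr _ _).
  have [z zw zS] := exists_outside_prefix (leq_trans Sk kw) wn.
  exists z; first by split=> //; apply: leq_trans zw (back_deg_le_d w).
  by apply: connect1; rewrite /induced /= !inE wS zS /stacked zw orbT.
have [x' [x'd x'S] xx'] := near_core x xS.
have [y' [y'd y'S] yy'] := near_core y yS.
apply: connect_trans xx' (connect_trans (_ : connect _ x' y') _); last first.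
  by rewrite (sym_connect_sym (induced_sym stacked_sym _)).
have [->|x'y'] := eqVneq x' y'; first exact: connect0.
apply: connect1; rewrite /induced /= !inE x'S y'S /stacked /back_deg x'd y'd.
by rewrite -neq_ltn val_eqE x'y'.
Qed.

Lemma nbhd_prefix m (mn : m < n) : d <= m ->
  nbhd stacked (prefix m.+1) (Ordinal mn) = prefix (back_deg m).
Proof.
move=> dm; apply/setP => u; rewrite !inE /stacked /=.
have [um|mu] := ltnP u m.+1 => /=; last by rewrite ltnNge (leq_trans (back_deg_le m)) // ltnW.
by rewrite ltnNge (leq_trans (back_deg_le u)).
Qed.

Lemma clique_bpoly_prefix t : t <= size L ->
  clique_bpoly stacked (prefix (d + t)) =
    (\sum_(i < d) 'X^i + \sum_(i < t) 'X^(nth 0 L i))%R.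
Proof.
elim: t => [_|t IH tL].
  rewrite big_ord0 addr0 addn0.
  rewrite (clique_bpoly_clique stacked_sym stacked_irr (prefix_clique (leqnn d))).
  by rewrite card_prefix // leq_addr.
have mn : d + t < n by rewrite ltn_add2l.
have N_eq := nbhd_prefix mn (leq_addr t d).
have sv : simplicial stacked (prefix (d + t).+1) (Ordinal mn).
  by rewrite /simplicial N_eq inE ltnSn prefix_clique // back_deg_le_d.
have del : prefix (d + t).+1 :\ Ordinal mn = prefix (d + t).
  by apply/setP => u; rewrite !inE -val_eqE /= ltnS ltn_neqAle andbC.
rewrite addnS (clique_bpoly_simplicial stacked_sym stacked_irr sv) del (IH (ltnW tL)) N_eq.
rewrite card_prefix; last by apply: leq_trans (back_deg_le_d _) (leq_addr _ _).
by rewrite big_ord_recr /= addrA /back_deg ltnNge leq_addr /= addKn.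
Qed.

Lemma clique_bpoly_stacked :
  clique_bpoly stacked setT = (\sum_(i < d) 'X^i + \sum_(s <- L) 'X^s)%R.
Proof.
have -> : [set: 'I_n] = prefix n by apply/setP => u; rewrite !inE ltn_ord.
by rewrite clique_bpoly_prefix // (big_nth 0) big_mkord.
Qed.

Lemma stacked_clique_number : d <= clique_number stacked.
Proof.
have := leq_bigmax_cond (F := fun S => #|S|) (P := is_clique stacked) _
  (prefix_clique (leqnn d)).
by rewrite card_prefix // leq_addr.
Qed.

End Stacking.

Lemma bpoly_realizable k c :
    (forall i, i < size c -> (0 < (bpoly c)`_i)%R) -> k <= size c ->
    (forall i, i < k -> ((bpoly c)`_i = 1)%R) ->
  exists (n : nat) (e : rel 'I_n),
    [/\ simple_graph e, k_connected e k, chordal e & clique_vector e = c].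
Proof.
move=> b_pos kd b1; set L := excess_exponents (bpoly c) (size c).
have L_lt : all (fun t => t < size c) L.
  by apply/allP => t; rewrite mem_excess_exponents => /andP[].
have kL : all (leq k) L.
  apply/allP => t; rewrite mem_excess_exponents => /andP[_ p1]; rewrite leqNgt.
  by apply/negP => /b1 b1t; rewrite b1t in p1.
exists (size c + size L), (@stacked (size c) L); split.
- by split; [exact: stacked_sym | exact: stacked_irr].
- exact: stacked_k_connected.
- exact: stacked_chordal.
apply: clique_vector_eq_bpoly; last exact: stacked_clique_number.
rewrite -clique_bpoly_setT clique_bpoly_stacked //.
by rewrite -sum_Xn_excess_exponents // size_bpoly.
Qed.

Theorem theorem1p1 (k d : nat) (c : seq nat) :
  1 <= d -> size c = d ->
  ((exists (n : nat) (e : rel 'I_n),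
      [/\ simple_graph e, k_connected e k, chordal e & clique_vector e = c])
   <->
   [/\ (forall i, i < d -> (0 < ((bpoly c)`_i)%R)%R),
       k <= d &
       (forall i, i < k -> ((bpoly c)`_i)%R = 1%R)]).
Proof.
move=> _ <-; split; last by case; apply: bpoly_realizable.
case=> n [e [[e_sym e_irr] ke e_chordal <-]].
rewrite size_map size_iota.
exact (chordal_k_connected_bpoly e_sym e_irr e_chordal ke).
Qed.
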